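(* Let $P(\lambda)=\sum_{j=0}^m A_j\lambda^j$ and $\Delta(\lambda)=\sum_{j=0}^m\Delta_j\lambda^j$ be $n\times n$ complex matrix polynomials, and let $\mu_1\neq\mu_2$ be complex numbers. If $\mu_1$ and $\mu_2$ are both eigenvalues of $Q(\lambda)=P(\lambda)+\Delta(\lambda)$, then for every $\gamma\neq 0$, $$ s_{2n-1}\big(F[P(\mu_1,\mu_2);\gamma]\big)\le \big\|F[\Delta(\mu_1,\mu_2);\gamma]\big\|. $$
   Context: For an $n\times n$ matrix polynomial $R(\lambda)$, distinct $\mu_1,\mu_2\in\mathbb{C}$ and $\gamma\in\mathbb{C}$, define the divided difference $R[\mu_1,\mu_2]=\frac{R(\mu_1)-R(\mu_2)}{\mu_1-\mu_2}$ and the $2n\times 2n$ matrix $F[R(\mu_1,\mu_2);\gamma]=\begin{bmatrix} R(\mu_1) & 0\\ \gamma R[\mu_1,\mu_2] & R(\mu_2)\end{bmatrix}$. For a matrix $M\in\mathbb{C}^{2n\times 2n}$, $s_1(M)\ge s_2(M)\ge\dots\ge s_{2n}(M)$ denote its singular values, so $s_{2n-1}$ is the second smallest. $\|\cdot\|$ is the spectral norm. A scalar $\lambda_0$ is an eigenvalue of a matrix polynomial $Q$ if $Q(\lambda_0)x=0$ for some nonzero $x\in\mathbb{C}^n$. *)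

From HB Require Import structures.
From mathcomp Require Import all_boot all_order all_algebra.
Set Implicit Arguments. Unset Strict Implicit. Unset Printing Implicit Defensive.
Import Order.TTheory GRing.Theory Num.Theory.
Local Open Scope ring_scope.

(* Scalars range over an arbitrary numClosedFieldType C
   (e.g. the complex numbers R[i]); conjugation is Num.conj. *)

Section Defs.
Variable C : numClosedFieldType.

Definition adjmx (p q : nat) (M : 'M[C]_(p, q)) : 'M[C]_(q, p) :=
  (map_mx Num.conj M)^T.

Definition eigvals (N : nat) (H : 'M[C]_N) : seq C :=
  sval (closed_field_poly_normal (char_poly H)).

(* singular values s_1 >= s_2 >= ... >= s_N of M : square roots of the
   eigenvalues of M^* M, sorted in nonincreasing order.
   sing_vals M is the list [:: s_1; ...; s_N] (0-based list indexing). *)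
Definition sing_vals (N : nat) (M : 'M[C]_N) : seq C :=
  sort (fun x y => y <= x) (map sqrtC (eigvals (adjmx M *m M))).

(* s_k(M), 1-based as in the paper *)
Definition sval_k (N : nat) (M : 'M[C]_N) (k : nat) : C :=
  nth 0 (sing_vals M) k.-1.

Definition spec_norm (N : nat) (M : 'M[C]_N) : C := sval_k M 1.

Definition mxpeval (n m : nat) (R : 'I_m.+1 -> 'M[C]_n) (l : C) : 'M[C]_n :=
  \sum_(j < m.+1) (l ^+ j) *: R j.

Definition divdiff (n m : nat) (R : 'I_m.+1 -> 'M[C]_n) (mu1 mu2 : C) : 'M[C]_n :=
  (mu1 - mu2)^-1 *: (mxpeval R mu1 - mxpeval R mu2).

Definition Fmx (n m : nat) (R : 'I_m.+1 -> 'M[C]_n) (mu1 mu2 g : C) : 'M[C]_(n + n) :=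
  block_mx (mxpeval R mu1) 0 (g *: divdiff R mu1 mu2) (mxpeval R mu2).

Definition is_mxp_eig (n m : nat) (R : 'I_m.+1 -> 'M[C]_n) (l : C) : Prop :=
  exists x : 'cV[C]_n, x != 0 /\ mxpeval R l *m x = 0.

End Defs.

From HB Require Import structures.
From mathcomp Require Import all_boot all_order all_algebra.
From mathcomp Require Import sesquilinear spectral zify.
Set Implicit Arguments. Unset Strict Implicit. Unset Printing Implicit Defensive.
Import Order.TTheory GRing.Theory Num.Theory.
Local Open Scope ring_scope.
Local Open Scope sesquilinear_scope.

(** If [Q = P + Δ] has the eigenvalues [μ1] with eigenvector [x1] and [μ2]
    with eigenvector [x2], then [(0; x2)] and [(x1; γ/(μ1-μ2) x1)] span a
    two-dimensional subspace of the kernel of [F[Q] = F[P] + F[Δ]].  On it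
    [F[P] v = - F[Δ] v], hence [|F[P] v| <= |F[Δ]| |v|].  By the min-max
    principle this bounds the second smallest singular value: if
    [s_(N-1)(M) > c], then all eigenvalues of [M^* M] but at most one exceed
    [c^2], and every two-dimensional subspace contains a nonzero [v]
    orthogonal to the eigenvector of that one, so [|M v| > c |v|]. *)

Lemma char_poly_similar (R : comUnitRingType) N (P A : 'M[R]_N) :
  P \in unitmx -> char_poly (invmx P *m A *m P) = char_poly A.
Proof.
move=> Pu; rewrite /char_poly /char_poly_mx.
set f := map_mx (@polyC R).
have fPVP : f (invmx P) *m f P = 1%:M by rewrite -map_mxM mulVmx // map_mx1.
have XE : 'X%:M = f (invmx P) *m 'X%:M *m f P :> 'M[{poly R}]_N.
  by rewrite (scalar_mxC 'X (f (invmx P))) -mulmxA fPVP mulmx1.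
rewrite /f !map_mxM -/f {1}XE -mulmxBl -mulmxBr !det_mulmx mulrAC -det_mulmx.
by rewrite fPVP det1 mul1r.
Qed.

Lemma count_le_sorted_ge disp (T : porderType disp) (x0 : T) (s : seq T) k c :
  sorted >=%O s -> (k < size s)%N -> (c < nth x0 s k)%O ->
  (count (<= c)%O s <= size s - k.+1)%N.
Proof.
move=> s_sorted ks c_lt; rewrite -[in X in (X <= _)%N](cat_take_drop k.+1 s).
rewrite count_cat (@eq_in_count _ _ pred0) ?count_pred0; last first.
  move=> y /(nthP x0) [i]; rewrite size_takel // ltnS => ik <-.
  rewrite nth_take //.
  apply: lt_geF; apply: (lt_le_trans c_lt).
  by have := sorted_leq_nth ge_trans lexx x0 s_sorted i k
    (leq_ltn_trans ik ks) ks ik.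
by rewrite (leq_trans (count_size _ _)) // size_drop.
Qed.

Lemma count_enum_le1 (T : finType) (x0 : T) (p : pred T) :
  (count p (enum T) <= 1)%N -> exists i0, forall i, i != i0 -> ~~ p i.
Proof.
rewrite -sum1_count big_enum_cond sum1_card => /card_le1_eqP p_eq.
have [i0 pi0|p0] := pickP p; last by exists x0 => i _; rewrite p0.
by exists i0 => i; apply: contra => pi; apply/eqP; apply: p_eq.
Qed.

Lemma nontrivial_lincomb_eq0 (R : comNzRingType) (x y : R) :
  exists a b, ((a != 0) || (b != 0)) /\ a * x + b * y = 0.
Proof.
have [xy0|xy_neq0] := boolP ((x == 0) && (y == 0)).
  exists 1, 0; case/andP: xy0 => /eqP-> /eqP->.
  by rewrite oner_neq0 !mulr0 addr0.
exists y, (- x); rewrite oppr_eq0 orbC -negb_and xy_neq0.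
by rewrite mulNr mulrC subrr.
Qed.

Lemma col_mx_pair_free (R : idomainType) n (x1 x2 : 'cV[R]_n) k :
  x1 != 0 -> x2 != 0 -> forall a b,
  a *: col_mx 0 x2 + b *: col_mx x1 (k *: x1) = 0 -> a = 0 /\ b = 0.
Proof.
move=> x1_neq0 x2_neq0 a b; rewrite !scale_col_mx add_col_mx => /eqP.
rewrite col_mx_eq0 scaler0 add0r scalemx_eq0 (negbTE x1_neq0) orbF.
case/andP => /eqP b0; rewrite b0 scale0r addr0 scalemx_eq0 (negbTE x2_neq0).
by rewrite orbF => /eqP.
Qed.

Section Singular.
Variable C : numClosedFieldType.

Lemma adjmxE p q (M : 'M[C]_(p, q)) : adjmx M = M ^t*.
Proof. by rewrite /adjmx map_trmx. Qed.

Lemma adjmxM p q r (M : 'M[C]_(p, q)) (N : 'M[C]_(q, r)) :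
  adjmx (M *m N) = adjmx N *m adjmx M.
Proof. by rewrite /adjmx map_mxM trmx_mul. Qed.

Lemma adjmxK p q (M : 'M[C]_(p, q)) : adjmx (adjmx M) = M.
Proof. by rewrite !adjmxE trmxCK. Qed.

Lemma size_eigvals N (H : 'M[C]_N) : size (eigvals H) = N.
Proof.
rewrite /eigvals; case: closed_field_poly_normal => r /= Hr.
rewrite (monicP (char_poly_monic H)) scale1r in Hr.
by have := size_char_poly H; rewrite Hr size_prod_XsubC => -[].
Qed.

Lemma eigvals_similar_diag N (H P : 'M[C]_N) (d : 'rV[C]_N) :
  P \in unitmx -> H = invmx P *m diag_mx d *m P ->
  perm_eq (eigvals H) [seq d 0 i | i <- enum 'I_N].
Proof.
move=> Pu HE; rewrite /eigvals; case: closed_field_poly_normal => r /= Hr.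
apply: prod_XsubC_eq.
rewrite -[LHS]scale1r -(monicP (char_poly_monic H)) -Hr HE char_poly_similar //.
rewrite char_poly_trig ?diag_mx_is_trig // big_map big_enum /=.
by apply: eq_bigr => i _; rewrite mxE eqxx mulr1n.
Qed.

Definition sqnorm N (v : 'cV[C]_N) : C := \sum_i `|v i 0| ^+ 2.

Lemma sqnorm_ge0 N (v : 'cV[C]_N) : 0 <= sqnorm v.
Proof. by rewrite sumr_ge0 // => i _; rewrite exprn_ge0. Qed.

Lemma sqnorm_eq0 N (v : 'cV[C]_N) : sqnorm v = 0 -> v = 0.
Proof.
move=> v0; apply/matrixP => i j; rewrite ord1 mxE.
have v_ge0 k : 0 <= `|v k 0| ^+ 2 by rewrite exprn_ge0.
have /eqP := psumr_eq0P (fun k _ => v_ge0 k) v0 (i := i) isT.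
by rewrite expf_eq0 normr_eq0 => /eqP.
Qed.

Lemma sqnormN N (v : 'cV[C]_N) : sqnorm (- v) = sqnorm v.
Proof. by apply: eq_bigr => i _; rewrite mxE normrN. Qed.

Lemma adjmx_diag_mulE N (w : 'cV[C]_N) (d : 'rV[C]_N) :
  (adjmx w *m diag_mx d *m w) 0 0 = \sum_i d 0 i * `|w i 0| ^+ 2.
Proof.
rewrite mul_mx_diag mxE; apply: eq_bigr => i _.
by rewrite /adjmx !mxE normCK (mulrC _ (d 0 i)) -mulrA (mulrC _^*).
Qed.

Lemma sqnormE N (v : 'cV[C]_N) : sqnorm v = (adjmx v *m v) 0 0.
Proof.
by rewrite mxE; apply: eq_bigr => i _; rewrite /adjmx !mxE normCK mulrC.
Qed.

Lemma sqnorm_mul_gram N (M P : 'M[C]_N) (d : 'rV[C]_N) (v : 'cV[C]_N) :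
  adjmx M *m M = adjmx P *m diag_mx d *m P ->
  sqnorm (M *m v) = \sum_i d 0 i * `|(P *m v) i 0| ^+ 2.
Proof.
move=> MME; rewrite -adjmx_diag_mulE sqnormE adjmxM -mulmxA (mulmxA (adjmx M)).
by rewrite MME adjmxM !mulmxA.
Qed.

Lemma sqnorm_mul_unitary N (P : 'M[C]_N) (v : 'cV[C]_N) :
  adjmx P *m P = 1%:M -> sqnorm (P *m v) = sqnorm v.
Proof.
by move=> PP1; rewrite !sqnormE adjmxM -mulmxA (mulmxA (adjmx P)) PP1 mul1mx.
Qed.

Lemma gram_spectral N (M : 'M[C]_N) : exists (P : 'M_N) (d : 'rV_N),
  [/\ adjmx P *m P = 1%:M, adjmx M *m M = adjmx P *m diag_mx d *m P,
      forall i, 0 <= d 0 i &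
      perm_eq (sing_vals M) [seq sqrtC (d 0 i) | i <- enum 'I_N]].
Proof.
have /hermitian_normalmx /orthomx_spectralP MME : adjmx M *m M \is hermsymmx.
  by apply/is_hermitianmxP; rewrite expr0 scale1r -adjmxE adjmxM adjmxK.
set P := spectralmx _ in MME; set d := spectral_diag _ in MME.
have Pu : P \in unitmx := spectral_unit _.
have PV : invmx P = adjmx P by rewrite adjmxE invmx_unitary ?spectral_unitarymx.
have PP1 : adjmx P *m P = 1%:M by rewrite -PV mulVmx.
rewrite PV in MME; exists P, d; split => // [i|].
  have := sqnorm_mul_gram (adjmx P *m delta_mx i 0) MME.
  rewrite (mulmxA P) -PV mulmxV // mul1mx (bigD1 i) //= big1 => [|j ji];
    last first.
    by rewrite mxE (negbTE ji) normr0 expr0n mulr0.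
  by rewrite mxE !eqxx normr1 expr1n mulr1 addr0 => <-; apply: sqnorm_ge0.
rewrite /sing_vals perm_sort (map_comp sqrtC (fun i => d 0 i)); apply: perm_map.
by apply: eigvals_similar_diag Pu _; rewrite PV.
Qed.

Lemma size_sing_vals N (M : 'M[C]_N) : size (sing_vals M) = N.
Proof. by rewrite size_sort size_map size_eigvals. Qed.

Lemma sing_vals_ge0 N (M : 'M[C]_N) : all (>= 0) (sing_vals M).
Proof.
have [P [d [_ _ d_ge0 svP]]] := gram_spectral M.
apply/allP => y; rewrite (perm_mem svP) => /mapP [i _ ->].
by rewrite sqrtC_ge0 d_ge0.
Qed.

Lemma sorted_sing_vals N (M : 'M[C]_N) : sorted >=%R (sing_vals M).
Proof.
have := sing_vals_ge0 M; rewrite /sing_vals all_sort => svs_ge0.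
apply: (sort_sorted_in (P := [pred x : C | 0 <= x])) svs_ge0 => x y /= x0 y0.
by rewrite orbC real_leVge ?ger0_real.
Qed.

Lemma sval_k_ge0 N (M : 'M[C]_N) k : 0 <= sval_k M k.
Proof.
rewrite /sval_k; case: (ltnP k.-1 (size (sing_vals M))) => [kM|kM].
  by apply: (allP (sing_vals_ge0 M)); rewrite mem_nth.
by rewrite nth_default.
Qed.

Lemma sqnorm_mul_le_spec_norm N (M : 'M[C]_N) (v : 'cV[C]_N) :
  sqnorm (M *m v) <= spec_norm M ^+ 2 * sqnorm v.
Proof.
have [P [d [PP1 MME d_ge0 svP]]] := gram_spectral M.
rewrite (sqnorm_mul_gram v MME) -(sqnorm_mul_unitary v PP1) mulr_sumr.
apply: ler_sum => i _; apply: ler_wpM2r; first exact: exprn_ge0.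
have /(nthP 0) [k kM kE] : sqrtC (d 0 i) \in sing_vals M.
  by rewrite (perm_mem svP); apply: map_f; rewrite mem_enum.
have sqrt_d_le : sqrtC (d 0 i) <= spec_norm M.
  rewrite -kE; have k_ge0 := leq0n k.
  by have := sorted_leq_nth ge_trans lexx 0 (sorted_sing_vals M) 0%N k
    (leq_ltn_trans k_ge0 kM) kM k_ge0.
by rewrite -(sqrtCK (d 0 i)) !expr2 ler_pM ?sqrtC_ge0 ?d_ge0.
Qed.

Lemma sqnorm_mul_le_of_kernel N (M E : 'M[C]_N) (v : 'cV[C]_N) :
  (M + E) *m v = 0 -> sqnorm (M *m v) <= spec_norm E ^+ 2 * sqnorm v.
Proof.
rewrite mulmxDl => /eqP; rewrite addr_eq0 => /eqP ->.
by rewrite sqnormN sqnorm_mul_le_spec_norm.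
Qed.

Lemma eq0_of_weighted_sqnorm_le N (d : 'rV[C]_N) (c2 : C) (i0 : 'I_N)
    (w : 'cV[C]_N) :
  (forall i, i != i0 -> c2 < d 0 i) -> w i0 0 = 0 ->
  \sum_i d 0 i * `|w i 0| ^+ 2 <= c2 * sqnorm w -> w = 0.
Proof.
move=> d_gt wi0 le_c2; apply: sqnorm_eq0.
pose t i := (d 0 i - c2) * `|w i 0| ^+ 2.
have t_ge0 i : 0 <= t i.
  have [->|ii0] := eqVneq i i0; first by rewrite /t wi0 normr0 expr0n mulr0.
  by rewrite mulr_ge0 ?exprn_ge0 // subr_ge0 ltW ?d_gt.
have t0 : \sum_i t i = 0.
  apply/le_anti; rewrite sumr_ge0 // andbT.
  rewrite -subr_le0 mulr_sumr -sumrB in le_c2.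
  by under eq_bigr do rewrite /t mulrBl.
apply: big1 => i _; have [->|ii0] := eqVneq i i0.
  by rewrite wi0 normr0 expr0n.
have /eqP := psumr_eq0P (fun k _ => t_ge0 k) t0 (i := i) isT.
rewrite mulf_eq0 subr_eq0 => /orP [/eqP d_eq|/eqP //].
by have := d_gt i ii0; rewrite d_eq ltxx.
Qed.

(* One direction of the min-max principle for [s_(N-1)]. *)
Lemma sval_k_pred_le N (M : 'M[C]_N) (c : C) (u1 u2 : 'cV[C]_N) : 0 <= c ->
  (forall a b, a *: u1 + b *: u2 = 0 -> a = 0 /\ b = 0) ->
  (forall a b, sqnorm (M *m (a *: u1 + b *: u2))
                 <= c ^+ 2 * sqnorm (a *: u1 + b *: u2)) ->
  sval_k M N.-1 <= c.
Proof.
move=> c_ge0 u_free Mu_le.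
have N_gt0 : (0 < N)%N.
  clear M Mu_le; case: N u1 u2 u_free => // u1 u2 /(_ 1 0).
  by move=> /(_ (flatmx0 _)) [/eqP]; rewrite oner_eq0.
have [P [d [PP1 MME d_ge0 svP]]] := gram_spectral M.
have [//|c_lt] := real_leP (ger0_real (sval_k_ge0 M N.-1)) (ger0_real c_ge0).
exfalso; have small_le1 : (count (<= c) (sing_vals M) <= 1)%N.
  apply: leq_trans (count_le_sorted_ge (sorted_sing_vals M) _ c_lt) _;
    rewrite size_sing_vals; lia.
rewrite (permP svP) count_map in small_le1.
have [i0 d_gt] := count_enum_le1 (Ordinal N_gt0) small_le1.
have {}d_gt i : i != i0 -> c ^+ 2 < d 0 i.
  move=> ii0; have c_lt_sqrt : c < sqrtC (d 0 i).
    by rewrite real_ltNge ?ger0_real ?sqrtC_ge0 ?d_ge0 ?d_gt.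
  by rewrite -(sqrtCK (d 0 i)) !expr2 ltr_pM.
have [a [b [ab_neq0 ab_i0]]] :=
  nontrivial_lincomb_eq0 ((P *m u1) i0 0) ((P *m u2) i0 0).
set v := a *: u1 + b *: u2.
have Pv_i0 : (P *m v) i0 0 = 0.
  by rewrite mulmxDr -!scalemxAr -ab_i0 mxE; congr (_ + _); apply: mxE.
have := Mu_le a b; rewrite (sqnorm_mul_gram v MME) -(sqnorm_mul_unitary v PP1).
move=> /(eq0_of_weighted_sqnorm_le d_gt Pv_i0) Pv0.
have [a0 b0] : a = 0 /\ b = 0.
  by apply: u_free; rewrite -/v -[v]mul1mx -PP1 -mulmxA Pv0 mulmx0.
by move: ab_neq0; rewrite a0 b0 eqxx.
Qed.

Lemma mxpeval_add n m (A D : 'I_m.+1 -> 'M[C]_n) l :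
  mxpeval (fun j => A j + D j) l = mxpeval A l + mxpeval D l.
Proof.
by rewrite /mxpeval -big_split; apply: eq_bigr => j _; rewrite scalerDr.
Qed.

Lemma Fmx_add n m (A D : 'I_m.+1 -> 'M[C]_n) mu1 mu2 g :
  Fmx (fun j => A j + D j) mu1 mu2 g = Fmx A mu1 mu2 g + Fmx D mu1 mu2 g.
Proof.
rewrite /Fmx /divdiff !mxpeval_add add_block_mx addr0; congr block_mx.
by rewrite -!scalerDr opprD addrACA.
Qed.

Lemma Fmx_mul_col0 n m (R : 'I_m.+1 -> 'M[C]_n) mu1 mu2 g (x : 'cV_n) :
  mxpeval R mu2 *m x = 0 -> Fmx R mu1 mu2 g *m col_mx 0 x = 0.
Proof.
by move=> Rx; rewrite /Fmx mul_block_col !mulmx0 !mul0mx Rx !addr0 col_mx0.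
Qed.

Lemma Fmx_mul_col n m (R : 'I_m.+1 -> 'M[C]_n) mu1 mu2 g (x : 'cV_n) :
  mxpeval R mu1 *m x = 0 ->
  Fmx R mu1 mu2 g *m col_mx x ((g / (mu1 - mu2)) *: x) = 0.
Proof.
move=> Rx; rewrite /Fmx mul_block_col mul0mx addr0 Rx /divdiff -!scalemxAl.
by rewrite mulmxBl Rx -scalemxAr sub0r !scalerN scalerA addNr col_mx0.
Qed.
End Singular.

Theorem lemma2 (C : numClosedFieldType) (n m : nat)
    (A D : 'I_m.+1 -> 'M[C]_n) (mu1 mu2 : C) :
  mu1 != mu2 ->
  is_mxp_eig (fun j => A j + D j) mu1 ->
  is_mxp_eig (fun j => A j + D j) mu2 ->
  forall g : C, g != 0 ->
  sval_k (Fmx A mu1 mu2 g) (2 * n - 1)%N <= spec_norm (Fmx D mu1 mu2 g).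
Proof.
move=> _ [x1 [x1_neq0 Qx1]] [x2 [x2_neq0 Qx2]] g _.
pose u1 : 'cV_(n + n) := col_mx 0 x2.
pose u2 : 'cV_(n + n) := col_mx x1 ((g / (mu1 - mu2)) *: x1).
have FQu a b : Fmx (fun j => A j + D j) mu1 mu2 g *m (a *: u1 + b *: u2) = 0.
  by rewrite mulmxDr -!scalemxAr Fmx_mul_col0 // Fmx_mul_col // !scaler0 addr0.
have -> : (2 * n - 1 = (n + n).-1)%N by lia.
apply: (sval_k_pred_le (u1 := u1) (u2 := u2) (sval_k_ge0 _ _)).
  by move=> a b; apply: col_mx_pair_free.
by move=> a b; apply: sqnorm_mul_le_of_kernel; rewrite -Fmx_add FQu.
Qed.
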